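(* Let $A$ be a finite set and let $C, D \subseteq O_A$ be total clones with $D \subseteq C$ such that for some $a\in A$ the constant function $c_a$ (of some arity) belongs to $C$ but not to $D$. Then $|\mathcal{I}_{\mathrm{str}}(D)| \geq |\mathcal{I}_{\mathrm{str}}(C)|$.
   Context: A partial function of arity $n$ on $A$ is a map $f:\operatorname{dom} f\to A$ with $\operatorname{dom} f\subseteq A^n$; it is total if $\operatorname{dom} f=A^n$. $P_A$ is the set of all partial functions on $A$, $O_A$ the set of total ones. Composition $F=f(g_1,\dots,g_n)$ ($f$ $n$-ary, $g_i$ $m$-ary) is given by $F(\mathbf{x})=f(g_1(\mathbf{x}),\dots,g_n(\mathbf{x}))$ on $\operatorname{dom} F=\{\mathbf{x}\in\bigcap_i\operatorname{dom} g_i : (g_1(\mathbf{x}),\dots,g_n(\mathbf{x}))\in\operatorname{dom} f\}$. A partial clone is a composition-closed subset of $P_A$ containing all projections; a total clone is one contained in $O_A$. A partial clone $X$ is strong if whenever $g\in X$ and $f$ is a restriction of $g$ ($\operatorname{dom} f\subseteq\operatorname{dom} g$, $f=g$ on $\operatorname{dom} f$) then $f\in X$. For a total clone $C$, $\mathcal{I}_{\mathrm{str}}(C)$ is the set of all strong partial clones $X\subseteq P_A$ with $X\cap O_A=C$. $c_a$ denotes the constant total function with value $a$. *)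

From mathcomp Require Import all_boot.
Set Implicit Arguments. Unset Strict Implicit. Unset Printing Implicit Defensive.

Section PartialFunctions.
Variable A : finType.

(* An n.+1-ary partial function on A: arguments are tuples x : 'I_n.+1 -> A
   (as finite functions); the value is None exactly outside the domain. *)
Definition pfn (n : nat) := {ffun 'I_n.+1 -> A} -> option A.

Definition PF := {n : nat & pfn n}.

Definition mkPF (n : nat) (f : pfn n) : PF := existT pfn n f.

Definition arity (h : PF) : nat := projT1 h.

Definition total (h : PF) : Prop := forall x, projT2 h x <> None.

Definition pcomp (n m : nat) (f : pfn n) (gs : 'I_n.+1 -> pfn m) : pfn m :=
  fun x =>
    match gs ord0 x with
    | None => None
    | Some a0 =>
        if [forall i, gs i x != None]
        then f [ffun i => odflt a0 (gs i x)]
        else None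
    end.

Definition proj (n : nat) (i : 'I_n.+1) : pfn n := fun x => Some (x i).

Definition cst (n : nat) (a : A) : pfn n := fun _ => Some a.

Definition restriction (n : nat) (f g : pfn n) : Prop :=
  forall x y, f x = Some y -> g x = Some y.

Definition partial_clone (X : PF -> Prop) : Prop :=
  (forall n (i : 'I_n.+1), X (mkPF (proj i))) /\
  (forall n m (f : pfn n) (gs : 'I_n.+1 -> pfn m),
      X (mkPF f) -> (forall i, X (mkPF (gs i))) -> X (mkPF (pcomp f gs))).

Definition total_clone (C : PF -> Prop) : Prop :=
  partial_clone C /\ (forall h, C h -> total h).

Definition strong_partial_clone (X : PF -> Prop) : Prop :=
  partial_clone X /\
  (forall n (f g : pfn n), X (mkPF g) -> restriction f g -> X (mkPF f)).

Definition Istr (C : PF -> Prop) (X : PF -> Prop) : Prop :=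
  strong_partial_clone X /\ (forall h, (X h /\ total h) <-> C h).

End PartialFunctions.

(* |S| <= |T| for families of sets: there is an injection from S into T *)
Definition card_le (U : Type) (S T : U -> Prop) : Prop :=
  exists phi : U -> U,
    (forall X, S X -> T (phi X)) /\
    (forall X Y, S X -> S Y -> phi X = phi Y -> X = Y).

From Pilot Require Import Defs.
From mathcomp Require Import all_boot.
From Stdlib Require Import FunctionalExtensionality PropExtensionality.

Set Implicit Arguments. Unset Strict Implicit. Unset Printing Implicit Defensive.

(* Otherwise these names resolve to ssrfun's [pcomp], Rocq's [proj] and ssrbool's [total]. *)
Local Notation pcomp := Defs.pcomp.
Local Notation proj := Defs.proj.
Local Notation total := Defs.total.

(* Send a strong partial clone X with X ∩ O_A = C to its D-core: the members
   h of X all of whose total composites h(g_0,...,g_k) with g_i ∈ D lie in D.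
   The D-core is a strong partial clone whose total part is D. It determines X:
   if f ∈ X, the restriction of f(x_0,...,x_n) to the points with an extra
   last argument x_{n+1} = a is still in X, and it lies in the D-core vacuously,
   since a total composite forces the last inner function to be c_a ∉ D.
   Conversely f is recovered from it by plugging in c_a ∈ C ⊆ X. *)

Section PartialComposition.
Variable A : finType.

Lemma pcompE n m (f : pfn A n) (gs : 'I_n.+1 -> pfn A m) x (y : {ffun 'I_n.+1 -> A}) :
  (forall i, gs i x = Some (y i)) -> pcomp f gs x = f y.
Proof.
move=> gsxE; rewrite /pcomp gsxE.
have -> : [forall i, gs i x != None] by apply/forallP => i; rewrite gsxE.
by congr f; apply/ffunP => i; rewrite ffunE gsxE.
Qed.

Lemma pcomp_defined_inner n m (f : pfn A n) (gs : 'I_n.+1 -> pfn A m) x i :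
  pcomp f gs x <> None -> gs i x <> None.
Proof.
rewrite /pcomp; case: (gs ord0 x) => [a0|] //.
by case: ifP => // /forallP/(_ i)/eqP.
Qed.

Lemma pcompA n k m (f : pfn A n) (hs : 'I_n.+1 -> pfn A k) (gs : 'I_k.+1 -> pfn A m) :
  pcomp (pcomp f hs) gs = pcomp f (fun j => pcomp (hs j) gs).
Proof.
apply: functional_extensionality => x; rewrite /pcomp.
by case: (gs ord0 x) => [a0|] //; case: [forall i, gs i x != None].
Qed.

Lemma pcomp_proj n (f : pfn A n) : pcomp f (@proj A n) = f.
Proof.
apply: functional_extensionality => x.
by rewrite (pcompE _ (y := x)).
Qed.

Lemma proj_pcomp n m (i : 'I_n.+1) (gs : 'I_n.+1 -> pfn A m) x :
  pcomp (proj i) gs x <> None -> pcomp (proj i) gs x = gs i x.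
Proof.
rewrite /pcomp; case: (gs ord0 x) => [a0|] //.
by case: ifP => // /forallP/(_ i); rewrite /proj ffunE; case: (gs i x).
Qed.

Lemma pcomp_restriction n m (f g : pfn A n) (gs : 'I_n.+1 -> pfn A m) :
  restriction f g -> restriction (pcomp f gs) (pcomp g gs).
Proof.
move=> fg x y; rewrite /pcomp; case: (gs ord0 x) => [a0|] //.
by case: ifP => // _; exact: fg.
Qed.

Lemma restriction_total_eq n (f g : pfn A n) :
  restriction f g -> (forall x, f x <> None) -> f = g.
Proof.
move=> fg ftot; apply: functional_extensionality => x.
by case E: (f x) => [b|]; [rewrite (fg x b E) | case: (ftot x E)].
Qed.

Lemma cst_pcomp m k (a : A) : @cst A m a = pcomp (@cst A k a) (fun=> @proj A m ord0).
Proof.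
apply: functional_extensionality => x.
by rewrite (pcompE _ (y := [ffun=> x ord0])) // => i; rewrite ffunE.
Qed.

Lemma partial_clone_cst (X : PF A -> Prop) k m (a : A) :
  partial_clone X -> X (mkPF (@cst A k a)) -> X (mkPF (@cst A m a)).
Proof.
by move=> [Xproj Xcomp] Xa; rewrite (cst_pcomp m k a); apply: Xcomp.
Qed.

Definition guard n (f : pfn A n) (a : A) : pfn A n.+1 :=
  fun x => if x ord_max == a then f [ffun i => x (widen_ord (leqnSn _) i)] else None.

Lemma guard_restriction n (f : pfn A n) a :
  restriction (guard f a) (pcomp f (fun i => @proj A n.+1 (widen_ord (leqnSn _) i))).
Proof.
move=> x y; rewrite /guard (pcompE _ (y := [ffun i => x (widen_ord (leqnSn _) i)])).
  by case: ifP.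
by move=> i; rewrite ffunE.
Qed.

Lemma guard_pcomp_last n m (f : pfn A n) a (hs : 'I_n.+2 -> pfn A m) x :
  pcomp (guard f a) hs x <> None -> hs ord_max x = Some a.
Proof.
rewrite /pcomp; case: (hs ord0 x) => [a0|] //; case: ifP => // /forallP/(_ ord_max).
by rewrite /guard ffunE; case: (hs ord_max x) => //= b _; case: eqP => [->|].
Qed.

Lemma guard_pcomp_cst n (f : pfn A n) a :
  pcomp (guard f a) (fun i => if (i < n.+1)%N then @proj A n (inord i) else @cst A n a) = f.
Proof.
apply: functional_extensionality => x.
rewrite (pcompE _ (y := [ffun i : 'I_n.+2 => if (i < n.+1)%N then x (inord i) else a])).
  rewrite /guard !ffunE /= ltnn eqxx; congr f.
  by apply/ffunP => i; rewrite !ffunE /= ltn_ord inord_val.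
by move=> i; rewrite ffunE; case: ifP.
Qed.

End PartialComposition.

Section Core.
Variables (A : finType) (D : PF A -> Prop).

Definition core (X : PF A -> Prop) : PF A -> Prop :=
  fun h => X h /\ forall m (gs : 'I_(arity h).+1 -> pfn A m),
    (forall i, D (mkPF (gs i))) -> (forall x, pcomp (projT2 h) gs x <> None) ->
    D (mkPF (pcomp (projT2 h) gs)).

Lemma core_strong (X : PF A -> Prop) :
  strong_partial_clone X -> strong_partial_clone (core X).
Proof.
move=> [[Xproj Xcomp] Xrestr]; split; first split.
- move=> n i; split=> // m gs Dgs gs_tot /=.
  suff -> : pcomp (proj i) gs = gs i by [].
  by apply: functional_extensionality => x; apply: proj_pcomp (gs_tot x).
- move=> n m f hs [Xf coref] corehs; split; first by apply: Xcomp => // i; case: (corehs i).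
  move=> p gs Dgs /=; rewrite pcompA => comp_tot.
  apply: coref => [j | //]; apply: (proj2 (corehs j)) => // x.
  exact: pcomp_defined_inner (comp_tot x).
- move=> n f g [Xg coreg] fg; split; first exact: Xrestr fg.
  move=> m gs Dgs /= comp_tot.
  have fgE := restriction_total_eq (pcomp_restriction (gs := gs) fg) comp_tot.
  by rewrite fgE; apply: coreg => // x; rewrite -fgE.
Qed.

Lemma core_total (X : PF A -> Prop) :
  total_clone D -> (forall h, D h -> X h) -> forall h, core X h /\ total h <-> D h.
Proof.
move=> [[Dproj Dcomp] Dtot] DX [n f]; split.
- move=> [[_ coref] ftot]; rewrite -(pcomp_proj f).
  by apply: coref => // x; rewrite pcomp_proj; exact: ftot.
- move=> Df; split; last exact: Dtot.
  by split; [exact: DX | move=> m gs Dgs _; apply: Dcomp].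
Qed.

Lemma sub_of_core_sub (X Y : PF A -> Prop) (a : A) :
  strong_partial_clone X -> partial_clone Y ->
  (forall n, Y (mkPF (@cst A n a))) -> (forall m, ~ D (mkPF (@cst A m a))) ->
  (forall h, core X h -> Y h) -> forall h, X h -> Y h.
Proof.
move=> [[Xproj Xcomp] Xrestr] [Yproj Ycomp] Ya nDa coreXY [n f] Xf.
have core_guard : core X (mkPF (guard f a)).
  split; first by apply: (Xrestr _ _ _ _ (@guard_restriction A n f a)); apply: Xcomp.
  move=> m hs Dhs comp_tot; case: (nDa m).
  suff -> : @cst A m a = hs ord_max by [].
  by apply: functional_extensionality => x; rewrite (guard_pcomp_last (comp_tot x)).
rewrite -(@guard_pcomp_cst A n f a); apply: Ycomp; first exact: coreXY.
by move=> i; case: ifP.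
Qed.

End Core.

Theorem mainTheorem10 (A : finType) (C D : PF A -> Prop) :
  total_clone C -> total_clone D ->
  (forall h, D h -> C h) ->
  (exists (a : A) (n : nat), C (mkPF (@cst A n a)) /\ ~ D (mkPF (@cst A n a))) ->
  card_le (Istr C) (Istr D).
Proof.
move=> Cclone Dclone DC [a [k [Cak nDak]]].
have Ca m : C (mkPF (@cst A m a)) by apply: partial_clone_cst Cak; case: Cclone.
have nDa m : ~ D (mkPF (@cst A m a)).
  by move=> Dam; apply: nDak; apply: partial_clone_cst Dam; case: Dclone.
have sub_of_core_eq X Y : Istr C X -> Istr C Y -> core D X = core D Y -> forall h, X h -> Y h.
  move=> [Xstrong _] [[Yclone _] YC] coreXY.
  apply: (sub_of_core_sub Xstrong Yclone _ nDa) => [n | h].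
  - exact: (proj1 ((YC _).2 (Ca n))).
  - by rewrite coreXY => -[].
exists (core D); split=> [X [Xstrong XC] | X Y IX IY coreXY].
- split; first exact: core_strong.
  by apply: core_total => // h /DC/XC[].
- apply: functional_extensionality => h; apply: propositional_extensionality.
  by split; apply: sub_of_core_eq.
Qed.
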